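(* Let $\mathbb{K}$ be a field of characteristic not $2$ and $p\geq 1$. Let $f:M_{1,p}(\mathbb{K})\to\mathbb{K}$, $g:M_{p,1}(\mathbb{K})\to\mathbb{K}$, $\varphi:M_{1,p}(\mathbb{K})\to M_{1,p}(\mathbb{K})$, $\psi:M_{p,1}(\mathbb{K})\to M_{p,1}(\mathbb{K})$ be linear. For $L\in M_{1,p}(\mathbb{K})$, $C\in M_{p,1}(\mathbb{K})$ set $$A_L=\begin{bmatrix}0&L&0\\ 0_{p\times1}&0_{p\times p}&0_{p\times1}\\ f(L)&\varphi(L)&0\end{bmatrix},\qquad B_C=\begin{bmatrix}0&0_{1\times p}&0\\ \psi(C)&0_{p\times p}&C\\ g(C)&0_{1\times p}&0\end{bmatrix}\in M_{p+2}(\mathbb{K}).$$ Assume either (i) for all $(L,C)$, every linear combination of $A_L$ and $B_C$ has at most one nonzero eigenvalue in $\overline{\mathbb{K}}$; or (ii) $p\neq 2$ and for all $(L,C)$, every linear combination of $A_L$ and $B_C$ has at most two distinct eigenvalues in $\overline{\mathbb{K}}$. Then there exist $\lambda,\mu\in\mathbb{K}$ with $\varphi(L)=\lambda L$ and $\psi(C)=\mu C$ for all $L,C$.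
   Context: $\overline{\mathbb{K}}$ is an algebraic closure of $\mathbb{K}$; $M_{a,b}(\mathbb{K})$ is the space of $a\times b$ matrices. *)

From HB Require Import structures.
From mathcomp Require Import all_boot all_order all_algebra.
Set Implicit Arguments. Unset Strict Implicit. Unset Printing Implicit Defensive.
Import GRing.Theory.
Local Open Scope ring_scope.

(* Block matrix A_L of size (1 + p) + 1 = p + 2:
   [ 0     L     0 ]
   [ 0     0     0 ]
   [ f L  phi L  0 ] *)
Definition matA (K : fieldType) (p : nat)
  (f : {linear 'rV[K]_p -> K^o}) (phi : {linear 'rV[K]_p -> 'rV[K]_p})
  (L : 'rV[K]_p) : 'M[K]_(1 + p + 1) :=
  block_mx (block_mx (0 : 'M[K]_1) L 0 0) (0 : 'M[K]_(1 + p, 1))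
           (row_mx ((f L : K)%:M : 'M[K]_1) (phi L)) (0 : 'M[K]_1).

(* Block matrix B_C of size (1 + p) + 1 = p + 2:
   [ 0      0   0 ]
   [ psi C  0   C ]
   [ g C    0   0 ] *)
Definition matB (K : fieldType) (p : nat)
  (g : {linear 'cV[K]_p -> K^o}) (psi : {linear 'cV[K]_p -> 'cV[K]_p})
  (C : 'cV[K]_p) : 'M[K]_(1 + p + 1) :=
  block_mx (block_mx (0 : 'M[K]_1) (0 : 'M[K]_(1, p)) (psi C) (0 : 'M[K]_p))
           (col_mx (0 : 'M[K]_1) C)
           (row_mx ((g C : K)%:M : 'M[K]_1) (0 : 'M[K]_(1, p))) (0 : 'M[K]_1).

Definition is_alg_closure (K : fieldType) (Kbar : closedFieldType)
  (iota : {rmorphism K -> Kbar}) : Prop :=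
  forall x : Kbar, exists q : {poly K}, q != 0 /\ root (map_poly iota q) x.

From HB Require Import structures.
From mathcomp Require Import all_boot all_order all_algebra ring zify.
Set Implicit Arguments. Unset Strict Implicit. Unset Printing Implicit Defensive.
Import GRing.Theory.
Local Open Scope ring_scope.

(* Write M(L, C) = A_L + B_C and look at LEFT eigenvectors of M(L, C), i.e.
   row vectors [v0 | w | v2] with [v0 | w | v2] M(L, C) = lam [v0 | w | v2].
   - If L C = 0 and either phi(L) C = 1 or L psi(C) = 1, then an explicit
     eigenvector exists for every lam with lam^2 = 1, so 1 and -1 are both
     eigenvalues; when p > 2 the kernel of the p x 2 matrix [C | psi(C)] also
     yields the eigenvalue 0.
   - Each of the two hypotheses of the theorem (read over Kbar, where the
     eigenvalues of a matrix over K are mapped by iota) forbids 1 and -1 from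
     being simultaneously eigenvalues of M(L, C), as char K <> 2.
   - By rescaling C we conclude: L C = 0 implies phi(L) C = 0 and L psi(C) = 0.
   - A linear endomorphism of row (resp. column) vectors preserving
     annihilation in this sense is a scalar multiple of the identity. *)

Section Scalar.
Variables (K : fieldType) (p : nat).

Lemma scalar_mx11_eq0 (x : K) : (x%:M == 0 :> 'M_1) = (x == 0).
Proof.
by apply/eqP/eqP => [/matrixP/(_ 0 0)|->]; rewrite ?raddf0 // !mxE eqxx mulr1n.
Qed.

Lemma mulmx_delta_col (u : 'rV[K]_p) (j : 'I_p) : u *m delta_mx j 0 = (u 0 j)%:M.
Proof. by apply/matrixP => a b; rewrite !ord1 -colE !mxE eqxx mulr1n. Qed.

Lemma ord_neq_gt1 (i j : 'I_p) : i != j -> (1 < p)%N.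
Proof. by move: i j => [i ?] [j ?]; rewrite -val_eqE /= => ?; lia. Qed.

(* A linear map F on row vectors such that L C = 0 implies F(L) C = 0 is a
   scalar: test on basis rows e_i against e_j (i <> j), which makes F(e_i)
   diagonal, and on e_i + e_j against e_i - e_j, which equalizes the diagonal.
   In dimension 1 every map is scalar, so the hypothesis is only used for p > 1. *)
Lemma scalar_of_annihilator_preserving (hp : (0 < p)%N)
    (F : {linear 'rV[K]_p -> 'rV[K]_p}) :
  (forall (L : 'rV[K]_p) (C : 'cV[K]_p), (1 < p)%N -> L *m C = 0 -> F L *m C = 0) ->
  exists lam : K, forall L, F L = lam *: L.
Proof.
move=> annF.
have offdiag i j : i != j -> F (delta_mx 0 i) 0 j = 0.
  move=> ij; apply/eqP; rewrite -scalar_mx11_eq0 -mulmx_delta_col.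
  by rewrite annF ?(ord_neq_gt1 ij) // mul_delta_mx_cond (negbTE ij).
pose c i := F (delta_mx 0 i) 0 i.
have diag i : F (delta_mx 0 i) = c i *: delta_mx 0 i.
  apply/matrixP => a k; rewrite !ord1 !mxE eqxx /=.
  by have [<-|ik] := eqVneq i k; rewrite ?mulr1 // mulr0 offdiag.
have c_const i j : c i = c j.
  have [-> //|ij] := eqVneq i j.
  have := annF (delta_mx 0 i + delta_mx 0 j) (delta_mx i 0 - delta_mx j 0) (ord_neq_gt1 ij).
  rewrite mulmxDl !mulmxBr !mul_delta_mx_cond (negbTE ij) eq_sym (negbTE ij) !eqxx.
  rewrite !mulr0n !mulr1n subr0 sub0r subrr => /(_ erefl) /eqP.
  rewrite !mulmx_delta_col -raddfB /= scalar_mx11_eq0 linearD /= !diag !mxE.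
  by rewrite !eqxx [j == i]eq_sym (negbTE ij) !mulr1 !mulr0 addr0 add0r subr_eq0 => /eqP.
exists (c (Ordinal hp)) => L.
rewrite [in RHS](row_sum_delta L) [in LHS](row_sum_delta L) linear_sum scaler_sumr.
by apply: eq_bigr => i _; rewrite linearZ /= diag (c_const i (Ordinal hp)) !scalerA mulrC.
Qed.

Lemma scalar_of_annihilator_preserving_col (hp : (0 < p)%N)
    (G : {linear 'cV[K]_p -> 'cV[K]_p}) :
  (forall (L : 'rV[K]_p) (C : 'cV[K]_p), (1 < p)%N -> L *m C = 0 -> L *m G C = 0) ->
  exists mu : K, forall C, G C = mu *: C.
Proof.
move=> annG.
have [L C p1 LC | mu Hmu] := @scalar_of_annihilator_preserving hp (trmx \o G \o trmx).
  apply: trmx_inj; rewrite /= trmx_mul trmxK trmx0.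
  by rewrite annG // -trmx_mul LC trmx0.
by exists mu => C; apply: trmx_inj; have := Hmu C^T; rewrite /= trmxK linearZ.
Qed.
End Scalar.

Section Pencil.
Variables (K : fieldType) (p : nat)
  (f : {linear 'rV[K]_p -> K^o}) (g : {linear 'cV[K]_p -> K^o})
  (phi : {linear 'rV[K]_p -> 'rV[K]_p}) (psi : {linear 'cV[K]_p -> 'cV[K]_p}).

Local Notation AB L C := (matA f phi L + matB g psi C).

Lemma AB_block L C : AB L C =
  block_mx (block_mx 0 L (psi C) 0) (col_mx 0 C)
           (row_mx ((f L : K)%:M + (g C : K)%:M) (phi L)) 0.
Proof. by rewrite /matA /matB !add_block_mx add_row_mx !addr0 !add0r. Qed.

Lemma AB_left_eigenvector L C (v0 v2 lam : K) (w : 'rV[K]_p) :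
  w *m psi C + v2 *: ((f L : K)%:M + (g C : K)%:M) = (lam * v0)%:M ->
  v0 *: L + v2 *: phi L = lam *: w ->
  w *m C = (lam * v2)%:M ->
  row_mx (row_mx v0%:M w) v2%:M *m AB L C = lam *: row_mx (row_mx v0%:M w) v2%:M.
Proof.
move=> E0 E1 E2; rewrite AB_block !mul_row_block mul_row_col mul_mx_row.
rewrite !mulmx0 ?mul0mx !addr0 !add0r !mul_scalar_mx add_row_mx E0 E1 E2.
by rewrite !scale_row_mx !scale_scalar_mx.
Qed.

Lemma row_block_eq0 (v0 v2 : K) (w : 'rV[K]_p) :
  (row_mx (row_mx v0%:M w) v2%:M == 0) = [&& v0 == 0, w == 0 & v2 == 0].
Proof. by rewrite !row_mx_eq0 !scalar_mx11_eq0 andbA. Qed.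

(* If L C = 0 and L psi(C) = 1, then [1 | lam L | 0] is a left eigenvector
   for any square root lam of 1. *)
Lemma eigenvalue_of_L_psiC L C (lam : K) : lam * lam = 1 ->
  L *m C = 0 -> L *m psi C = 1%:M -> eigenvalue (AB L C) lam.
Proof.
move=> lam2 LC LpsiC; apply/eigenvalueP; exists (row_mx (row_mx 1%:M (lam *: L)) 0%:M).
  apply: AB_left_eigenvector.
  - by rewrite -scalemxAl LpsiC scale0r addr0 scale_scalar_mx mulr1.
  - by rewrite scale1r scale0r addr0 scalerA lam2 scale1r.
  - by rewrite -scalemxAl LC scaler0 mulr0 raddf0.
by rewrite row_block_eq0 oner_eq0.
Qed.

(* If L C = 0, phi(L) C = 1 and x := L psi(C) <> 1, then
   [v0 | lam (v0 L + phi(L)) | 1] is a left eigenvector for any square root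
   lam of 1, where v0 = lam (lam phi(L) psi(C) + f(L) + g(C)) / (1 - x). *)
Lemma eigenvalue_of_phiL_C L C (lam : K) : lam * lam = 1 ->
  L *m C = 0 -> phi L *m C = 1%:M -> (L *m psi C) 0 0 != 1 ->
  eigenvalue (AB L C) lam.
Proof.
move=> lam2 LC phiLC; set x := (L *m psi C) 0 0 => x_neq1.
set k := (phi L *m psi C) 0 0; set h := (f L : K) + g C.
have x_unit : 1 - x != 0 by rewrite subr_eq0 eq_sym.
pose v0 := lam * (lam * k + h) / (1 - x).
apply/eigenvalueP; exists (row_mx (row_mx v0%:M (lam *: (v0 *: L + phi L))) 1%:M).
  apply: AB_left_eigenvector.
  - rewrite -scalemxAl mulmxDl -scalemxAl (mx11_scalar (L *m psi C)).
    rewrite (mx11_scalar (phi L *m psi C)) -/x -/k scale1r -raddfD /= -/h.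
    rewrite !scale_scalar_mx -raddfD /= scale_scalar_mx -raddfD /=; congr (_ %:M).
    have v0E : lam * k + h = lam * v0 * (1 - x) by rewrite /v0 !mulrA lam2 mul1r mulfVK.
    transitivity (lam * v0 * x + (lam * k + h)); first ring.
    by rewrite v0E; ring.
  - by rewrite scale1r scalerA lam2 scale1r.
  - by rewrite -scalemxAl mulmxDl -scalemxAl LC scaler0 add0r phiLC scale_scalar_mx mulr1.
by rewrite row_block_eq0 oner_eq0 !andbF.
Qed.

(* For p > 2 some nonzero w satisfies w C = 0 = w psi(C), and [0 | w | 0]
   is then in the left kernel of A_L + B_C. *)
Lemma eigenvalue_zero L C : (2 < p)%N -> eigenvalue (AB L C) 0.
Proof.
move=> p3; pose N := row_mx C (psi C).
have : kermx N != 0.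
  rewrite -mxrank_eq0 mxrank_ker subn_eq0 -ltnNge.
  exact: leq_ltn_trans (rank_leq_col N) p3.
case/matrix0Pn => i [j kerij]; set w := row i (kermx N).
have /eqP : w *m N = 0 by rewrite -row_mul mulmx_ker row0.
rewrite mul_mx_row row_mx_eq0 => /andP[/eqP wC /eqP wpsiC].
apply/eigenvalueP; exists (row_mx (row_mx 0%:M w) 0%:M).
  apply: AB_left_eigenvector; rewrite ?wpsiC ?wC ?scale0r ?mul0r ?mulr0 ?addr0 ?raddf0 //. 
rewrite row_block_eq0 eqxx andbT /=; apply: contraNN kerij => /eqP /matrixP /(_ 0 j).
by rewrite mxE => ->; rewrite mxE.
Qed.
Lemma eigenvalue_of_witness L C (lam : K) : lam * lam = 1 -> L *m C = 0 ->
  phi L *m C = 1%:M \/ L *m psi C = 1%:M -> eigenvalue (AB L C) lam.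
Proof.
move=> lam2 LC witness; have [x1|x_neq1] := eqVneq ((L *m psi C) 0 0) 1.
  by apply: eigenvalue_of_L_psiC; rewrite // (mx11_scalar (L *m psi C)) x1.
case: witness => [phiLC|LpsiC]; first exact: eigenvalue_of_phiL_C.
by move: x_neq1; rewrite LpsiC mxE eqxx mulr1n eqxx.
Qed.

(* If 1 and -1 are never simultaneously eigenvalues of A_L + B_C (for p > 1),
   then L C = 0 forces phi(L) C = 0 and L psi(C) = 0: otherwise rescaling C
   would produce a witness as above. *)
Lemma annihilators_of_spectral_gap :
  (forall L C, (1 < p)%N -> eigenvalue (AB L C) 1 -> eigenvalue (AB L C) (-1) -> False) ->
  forall L C, (1 < p)%N -> L *m C = 0 -> phi L *m C = 0 /\ L *m psi C = 0.
Proof.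
move=> gap L C p1 LC.
have no_witness D : L *m D = 0 -> phi L *m D = 1%:M \/ L *m psi D = 1%:M -> False.
  by move=> LD witness; apply: (gap L D p1); apply: eigenvalue_of_witness;
    rewrite // ?mulrNN mulr1.
have normalize (X : 'rV[K]_p) (D : 'cV_p) :
    X *m D != 0 -> X *m (((X *m D) 0 0)^-1 *: D) = 1%:M.
  rewrite -scalemxAr [X *m D]mx11_scalar; set c := (X *m D) 0 0.
  by rewrite scalar_mx11_eq0 scale_scalar_mx mxE eqxx mulr1n => /mulVf ->.
have LCs (c : K) : L *m (c *: C) = 0 by rewrite -scalemxAr LC scaler0.
split; apply/eqP/negP => /negP nz.
  by apply: (no_witness _ (LCs ((phi L *m C) 0 0)^-1)); left; apply: normalize.
apply: (no_witness _ (LCs ((L *m psi C) 0 0)^-1)).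
by right; rewrite linearZ; apply: normalize.
Qed.
End Pencil.

Theorem mainTheorem15 (K : fieldType) (Kbar : closedFieldType)
  (iota : {rmorphism K -> Kbar}) (halg : is_alg_closure iota)
  (hchar : (2 \notin [pchar K])%N) (p : nat) (hp : (0 < p)%N)
  (f : {linear 'rV[K]_p -> K^o}) (g : {linear 'cV[K]_p -> K^o})
  (phi : {linear 'rV[K]_p -> 'rV[K]_p}) (psi : {linear 'cV[K]_p -> 'cV[K]_p}) :
  ((forall (L : 'rV[K]_p) (C : 'cV[K]_p) (a b : K) (x y : Kbar),
      let M := map_mx iota (a *: matA f phi L + b *: matB g psi C) in
      eigenvalue M x -> eigenvalue M y -> x != 0 -> y != 0 -> x = y)
   \/
   (p <> 2%N /\
    forall (L : 'rV[K]_p) (C : 'cV[K]_p) (a b : K) (x y z : Kbar),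
      let M := map_mx iota (a *: matA f phi L + b *: matB g psi C) in
      eigenvalue M x -> eigenvalue M y -> eigenvalue M z ->
      x = y \/ x = z \/ y = z)) ->
  exists lam mu : K,
    (forall L : 'rV[K]_p, phi L = lam *: L) /\ (forall C : 'cV[K]_p, psi C = mu *: C).
Proof.
move=> spectrum.
have one_neq_m1 : (1 : K) != -1.
  by apply: contra hchar => /eqP one_m1; rewrite inE /= mulr2n {2}one_m1 subrr eqxx.
have gap L C : (1 < p)%N -> eigenvalue (matA f phi L + matB g psi C) 1 ->
    eigenvalue (matA f phi L + matB g psi C) (-1) -> False.
  move=> p1; rewrite -(eigenvalue_map iota) => e1; rewrite -(eigenvalue_map iota) => em1.
  rewrite -[matA _ _ _]scale1r -[matB _ _ _]scale1r in e1 em1.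
  case: spectrum => [one_nz | [p_neq2 two_vals]].
    move/eqP: one_neq_m1; apply; apply: (fmorph_inj iota); apply: one_nz e1 em1 _ _;
      by rewrite fmorph_eq0 ?oppr_eq0 oner_eq0.
  have e0 : eigenvalue (map_mx iota (1 *: matA f phi L + 1 *: matB g psi C)) (iota 0).
    by rewrite !scale1r eigenvalue_map; apply: eigenvalue_zero; lia.
  case: (two_vals L C 1 1 _ _ _ e1 em1 e0) => [|[|]] /fmorph_inj /eqP.
  - exact/negP.
  - by rewrite oner_eq0.
  - by rewrite oppr_eq0 oner_eq0.
have annihilators := annihilators_of_spectral_gap gap.
have [lam philam] := scalar_of_annihilator_preserving hp
  (fun L C p1 LC => (annihilators L C p1 LC).1).
have [mu psimu] := scalar_of_annihilator_preserving_col hp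
  (fun L C p1 LC => (annihilators L C p1 LC).2).
by exists lam, mu.
Qed.
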